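(* Let $V\subset Z^n$ be finite, $G$ an Abelian group of order $|V|$, and $\phi:Z^n\to G$ a homomorphism whose restriction to $V$ is a bijection, and let $\mathcal{T}=\{V+l;\ l\in\ker\phi\}$ be the corresponding lattice tiling of $Z^n$. Then $\mathcal{T}$ is $p$-periodic, where $p=\mathrm{lcm}\{\mathrm{ord}(\phi(e_1)),\dots,\mathrm{ord}(\phi(e_n))\}$ and $\mathrm{ord}(g)$ is the order of $g$ in $G$.
   Context: $e_i$ is the $i$-th unit vector of $Z^n$. A set $\mathcal{S}\subset Z^n$ is $p$-periodic ($p>0$) if $s\in\mathcal{S}\iff s+pe_i\in\mathcal{S}$ for all $i=1,\dots,n$, and $p$ is the smallest positive number with this property. A tiling $\{V+l;\ l\in\mathcal{L}\}$ is $p$-periodic if $\mathcal{L}$ is $p$-periodic. *)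

From HB Require Import structures.
From mathcomp Require Import all_boot all_order all_algebra all_fingroup.
From mathcomp Require Import finmap.
Set Implicit Arguments. Unset Strict Implicit. Unset Printing Implicit Defensive.
Import GRing.Theory.
Local Open Scope ring_scope.

Definition unitv (n : nat) (i : 'I_n) : 'rV[int]_n := delta_mx 0 i.

Definition is_period (n : nat) (S : 'rV[int]_n -> Prop) (q : nat) : Prop :=
  forall (s : 'rV[int]_n) (i : 'I_n), S s <-> S (s + unitv i *+ q).

Definition p_periodic (n : nat) (S : 'rV[int]_n -> Prop) (p : nat) : Prop :=
  (0 < p)%N /\ is_period S p /\
  (forall q : nat, (0 < q)%N -> is_period S q -> (p <= q)%N).

(* A tiling {V + l ; l \in L} is p-periodic iff L is p-periodic. *)
Definition tiling_p_periodic (n : nat) (V : {fset 'rV[int]_n})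
  (L : 'rV[int]_n -> Prop) (p : nat) : Prop := p_periodic L p.

From HB Require Import structures.
From mathcomp Require Import all_boot all_order all_algebra all_fingroup.
From mathcomp Require Import finmap cyclic.
Import GRing.Theory.
Local Open Scope ring_scope.
Local Open Scope fset_scope.

(* Since phi (l + q e_i) = phi l * phi(e_i)^q, the integer q is a period of
   ker phi exactly when q kills every phi(e_i), i.e. when the lcm of their
   orders divides q; that lcm is therefore the least positive period. *)

Lemma biglcmn_gt0 (I : finType) (F : I -> nat) :
  (forall i, 0 < F i)%N -> (0 < \big[lcmn/1%N]_(i : I) F i)%N.
Proof.
move=> F_gt0; apply: (big_ind (fun m => 0 < m)%N) => // m k m_gt0 k_gt0.
by rewrite lcmn_gt0 m_gt0 k_gt0.
Qed.

Section KernelPeriods.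

Variables (n : nat) (gT : finGroupType) (phi : 'rV[int]_n -> gT).
Hypothesis phiD : forall x y, phi (x + y) = (phi x * phi y)%g.

Lemma morph_phi0 : phi 0 = 1%g.
Proof.
by apply: (mulgI (phi 0)); rewrite mulg1 -phiD addr0.
Qed.

Lemma morph_phiMn x q : phi (x *+ q) = (phi x ^+ q)%g.
Proof.
elim: q => [|q IHq]; first by rewrite mulr0n expg0 morph_phi0.
by rewrite mulrS phiD IHq expgS.
Qed.

Lemma is_period_kerP q :
  is_period (fun l => phi l = 1%g) q <-> forall i, (phi (unitv i) ^+ q = 1)%g.
Proof.
split=> [per_q i | kill_q s i].
  by have := (per_q 0 i).1 morph_phi0; rewrite add0r morph_phiMn.
by rewrite phiD morph_phiMn kill_q mulg1.
Qed.

Lemma is_period_ker_dvdn q :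
  is_period (fun l => phi l = 1%g) q <->
  (\big[lcmn/1%N]_(i < n) #[phi (unitv i)]%g %| q)%N.
Proof.
rewrite is_period_kerP; split=> [kill_q | /dvdn_biglcmP dvd_q i].
  by apply/dvdn_biglcmP=> i _; rewrite order_dvdn kill_q.
by apply/eqP; rewrite -order_dvdn dvd_q.
Qed.

Lemma ker_p_periodic :
  p_periodic (fun l => phi l = 1%g) (\big[lcmn/1%N]_(i < n) #[phi (unitv i)]%g).
Proof.
split; last split.
- exact: biglcmn_gt0.
- exact/is_period_ker_dvdn.
- by move=> q q_gt0 /is_period_ker_dvdn; apply: dvdn_leq.
Qed.

End KernelPeriods.

Theorem corollary1 (n : nat) (V : {fset 'rV[int]_n}) (gT : finGroupType)
  (Gab : abelian [set: gT]) (Gord : #|gT| = #|` V|%N)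
  (phi : 'rV[int]_n -> gT)
  (phi_hom : forall x y : 'rV[int]_n, phi (x + y)%R = (phi x * phi y)%g)
  (phi_inj : {in V &, injective phi})
  (phi_surj : forall g : gT, exists2 v, v \in V & phi v = g) :
  tiling_p_periodic V (fun l => phi l = 1%g)
    (\big[lcmn/1%N]_(i < n) #[phi (unitv i)]%g).
Proof. exact: ker_p_periodic. Qed.
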